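(* Consider the following private response scheme. Fix a privacy parameter $\epsilon>0$, a response budget $K\in\mathbb{Z}_{\ge 1}$, and $P\in\mathbb{Z}_{\ge 1}$. There is a finite list of candidate patterns $\mathcal{C}_t(1),\dots,\mathcal{C}_t(|\mathcal{C}_t|)$, and each candidate is assigned to exactly $P$ distinct data owners; each data owner is assigned at most $K$ candidates in total (and never the same candidate twice). Data owner $j$, holding local data $d_j$, forms a vector $R_j\in\mathbb{Z}^{|\mathcal{C}_t|}$ with $$R_j[i]=\begin{cases}0 & \text{if } j \text{ is not assigned } \mathcal{C}_t(i),\\ \mathcal{X}_{j,i}-\mathcal{Y}_{j,i} & \text{if } j \text{ is assigned } \mathcal{C}_t(i) \text{ and } \mathcal{C}_t(i)\notin d_j,\\ 1+\mathcal{X}_{j,i}-\mathcal{Y}_{j,i} & \text{if } j \text{ is assigned } \mathcal{C}_t(i) \text{ and } \mathcal{C}_t(i)\in d_j,\end{cases}$$ where all $\mathcal{X}_{j,i},\mathcal{Y}_{j,i}$ are mutually independent random variables with the Pólya$(1/P,\,e^{-\epsilon/K})$ distribution. The vectors $R_j$ are uploaded via secure aggregation, so that the data analyst learns only the sum $\sum_j R_j$. Then this scheme satisfies $\epsilon$-distributed differential privacy for every data owner; that is, the released aggregate $\sum_j R_j$ satisfies $\epsilon$-differential privacy with respect to changing the local data $d_j$ of any single data owner $j$.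
   Context: The Pólya$(r,p)$ distribution ($r>0$, $p\in(0,1)$) has probability mass function $\mathbb{P}(\mathcal{X}=x)=\binom{r+x-1}{r-1}p^x(1-p)^r$ for $x\in\mathbb{Z}_{\ge 0}$. A two-sided geometric random variable $G(\alpha)$, $\alpha\in(0,1)$, has $\mathbb{P}(G(\alpha)=x)=\frac{1-\alpha}{1+\alpha}\alpha^{|x|}$ for $x\in\mathbb{Z}$. A randomized mechanism $M$ satisfies $\epsilon$-differential privacy if for all neighbouring inputs $S,S'$ and all sets $O$ of outputs, $\mathbb{P}(M(S)\in O)\le e^{\epsilon}\mathbb{P}(M(S')\in O)$. ''Distributed differential privacy'' means: individual uploads are hidden by secure aggregation (the analyst only sees their sum), and the aggregated sum satisfies (central) differential privacy. The notation $\mathcal{C}_t(i)\in d_j$ means that candidate pattern $\mathcal{C}_t(i)$ is contained in data owner $j$'s local data (e.g. the itemset or subsequence occurs in it). *)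

From HB Require Import structures.
From mathcomp Require Import all_boot all_order all_algebra.
From mathcomp Require Import all_classical all_reals.
From mathcomp Require Import ereal sequences exp esum.
Set Implicit Arguments. Unset Strict Implicit. Unset Printing Implicit Defensive.
Import Order.TTheory GRing.Theory Num.Theory.
Local Open Scope ring_scope.

(* Generalized binomial coefficient binom(r+x-1, r-1) = binom(r+x-1, x)
   = prod_{k<x} (r+k)/(k+1), valid for real r > 0. *)
Definition gbinom {R : realType} (r : R) (x : nat) : R :=
  \prod_(k < x) ((r + k%:R) / (k.+1)%:R).

Definition polya_pmf {R : realType} (r p : R) (x : nat) : R :=
  gbinom r x * p ^+ x * powR (1 - p) r.

(* Noise space: a pair (X_{j,i}, Y_{j,i}) for every owner j and candidate i. *)
Definition noise (n m : nat) := {ffun 'I_n * 'I_m -> nat * nat}.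

Definition noise_pmf {R : realType} (r p : R) (n m : nat) (nu : noise n m) : R :=
  \prod_(q : 'I_n * 'I_m) (polya_pmf r p (nu q).1 * polya_pmf r p (nu q).2).

Definition upload {Pat D : Type} (mem : Pat -> D -> bool) (n m : nat)
  (C : 'I_m -> Pat) (A : 'I_n -> 'I_m -> bool) (d : 'I_n -> D)
  (nu : noise n m) (j : 'I_n) (i : 'I_m) : int :=
  if A j i then (nat_of_bool (mem (C i) (d j)))%:Z + ((nu (j, i)).1)%:Z
                  - ((nu (j, i)).2)%:Z
  else 0.

Definition aggregate {Pat D : Type} (mem : Pat -> D -> bool) (n m : nat)
  (C : 'I_m -> Pat) (A : 'I_n -> 'I_m -> bool) (d : 'I_n -> D)
  (nu : noise n m) : 'I_m -> int :=
  fun i => \sum_(j < n) upload mem C A d nu j i.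

Definition prob_out {R : realType} {Pat D : Type} (mem : Pat -> D -> bool)
  (n m : nat) (r p : R) (C : 'I_m -> Pat) (A : 'I_n -> 'I_m -> bool)
  (d : 'I_n -> D) (O : set ('I_m -> int)) : \bar R :=
  esum [set nu : noise n m | O (aggregate mem C A d nu)]
       (fun nu => (noise_pmf r p nu)%:E).

From HB Require Import structures.
From mathcomp Require Import all_boot all_order all_algebra.
From mathcomp Require Import all_classical all_reals.
From mathcomp Require Import ereal sequences exp esum.
From mathcomp Require Import ring zify.
Import Order.TTheory GRing.Theory Num.Theory.
Set Implicit Arguments. Unset Strict Implicit. Unset Printing Implicit Defensive.
Local Open Scope ring_scope.

(* The aggregate is [bias d + N]: the bias counts, for each candidate, the
   assigned owners holding it, and [N i] sums [X - Y] over the owners assigned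
   to [i].  Replacing [d_j] moves the bias by at most one in at most [K]
   coordinates, so it suffices that a unit shift of one coordinate of the
   offset changes the probability of any event by a factor at most
   [p^-1 = e^(eps/K)].  This follows by mass transport, without computing the
   law of [N]: if [x_k] is the noise of the [k]-th assigned owner on the
   shifted side and [S] their sum, the Pólya recurrence
   [(x+1) f(x+1) = p (r+x) f(x)] and [P r = 1] give
   [p W(nu) = sum_k (x_k+1)/(S+1) W(nu + e_k)] for the joint pmf [W].  The
   shifts [nu |-> nu + e_k] are injective and the weights [x_k/S] of any
   configuration add up to at most one, so the mass [p W] of an event is
   carried into the shifted event. *)

Definition side (b : bool) (xy : nat * nat) : nat := if b then xy.1 else xy.2.

Definition bump_side (b : bool) (xy : nat * nat) : nat * nat :=
  if b then (xy.1.+1, xy.2) else (xy.1, xy.2.+1).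

Definition noise_shift n m (b : bool) (q0 : 'I_n * 'I_m) (nu : noise n m) :
  noise n m := [ffun q => if q == q0 then bump_side b (nu q) else nu q].

Lemma noise_shift_inj n m b q0 : injective (@noise_shift n m b q0).
Proof.
move=> nu1 nu2 eq12; apply/ffunP => q; move/ffunP/(_ q): eq12; rewrite !ffunE.
by case: eqP => // _; case: b; case: (nu1 q) (nu2 q) => ? ? [? ?] /= [-> ->].
Qed.

Lemma side_noise_shift n m b q (nu : noise n m) :
  side b (noise_shift b q nu q) = (side b (nu q)).+1.
Proof. by rewrite ffunE eqxx; case: b. Qed.

Section Polya.
Variables (R : realType) (r p : R).

Lemma polya_pmfS x :
  polya_pmf r p x.+1 = polya_pmf r p x * (p * (r + x%:R) / x.+1%:R).
Proof. by rewrite /polya_pmf /gbinom big_ord_recr exprS /=; ring. Qed.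

Lemma noise_pmf_shift n m b q0 (nu : noise n m) :
  noise_pmf r p (noise_shift b q0 nu) =
  noise_pmf r p nu * (p * (r + (side b (nu q0))%:R) / (side b (nu q0)).+1%:R).
Proof.
rewrite /noise_pmf (bigD1 q0) //= [in RHS](bigD1 q0) //= ffunE eqxx.
under eq_bigr => q /negPf q_neq do rewrite ffunE q_neq.
by case: b; rewrite /= polya_pmfS; ring.
Qed.

Hypotheses (r_ge0 : 0 <= r) (p_ge0 : 0 <= p).

Lemma polya_pmf_ge0 x : 0 <= polya_pmf r p x.
Proof.
rewrite /polya_pmf !mulr_ge0 ?exprn_ge0 ?powR_ge0 //.
by apply: prodr_ge0 => k _; rewrite divr_ge0 ?addr_ge0.
Qed.

Lemma noise_pmf_ge0 n m (nu : noise n m) : 0 <= noise_pmf r p nu.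
Proof. by apply: prodr_ge0 => q _; rewrite mulr_ge0 ?polya_pmf_ge0. Qed.

End Polya.

Section EsumFacts.
Variables (R : realType) (T : choiceType).
Local Open Scope ereal_scope.

Lemma esumZl (S : set T) (f : T -> \bar R) (c : R) :
  (0 < c)%R -> (forall x, 0 <= f x) ->
  \esum_(x in S) (c%:E * f x) = c%:E * \esum_(x in S) f x.
Proof.
move=> c_gt0 f_ge0; rewrite /esum -ereal_sup_pZl //; congr ereal_sup.
apply/seteqP; split => y /=.
  by move=> [X SX <-]; exists (\sum_(x \in X) f x); [exists X|rewrite ge0_mule_fsumr].
by move=> [z [X SX <-] <-]; exists X => //; rewrite ge0_mule_fsumr.
Qed.

Lemma ge0_subset_esum (S1 S2 : set T) (f : T -> \bar R) :
  (S1 `<=` S2)%classic -> (forall x, 0 <= f x) ->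
  \esum_(x in S1) f x <= \esum_(x in S2) f x.
Proof.
move=> S12 f_ge0; rewrite (esum_mkcond S1) (esum_mkcond S2); apply: le_esum => x _.
case: (boolP (x \in S1)) => [x_S1|_]; last by case: ifP.
by rewrite (mem_set (S12 _ (set_mem x_S1))).
Qed.

End EsumFacts.

Definition noise_mass (R : realType) (r p : R) n m (Phi : set (noise n m)) :
  \bar R := \esum_(nu in Phi) (noise_pmf r p nu)%:E.

Lemma noise_mass_ge0 (R : realType) (r p : R) n m (Phi : set (noise n m)) :
  0 <= r -> 0 <= p -> (0 <= noise_mass r p Phi)%E.
Proof.
by move=> r_ge0 p_ge0; apply: esum_ge0 => nu _; rewrite lee_fin noise_pmf_ge0.
Qed.

Section Transport.
Variables (R : realType) (r p : R) (n m : nat) (A : 'I_n -> 'I_m -> bool).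
Variables (i0 : 'I_m) (b : bool).
Hypotheses (r_ge0 : 0 <= r) (p_gt0 : 0 < p).
Hypothesis r_owners : r * #|[set k | A k i0]|%:R = 1.

Let p_ge0 : 0 <= p. Proof. exact: ltW. Qed.

Definition side_total (nu : noise n m) : nat :=
  \sum_(k < n | A k i0) side b (nu (k, i0)).

Lemma side_total_shift k nu : A k i0 ->
  side_total (noise_shift b (k, i0) nu) = (side_total nu).+1.
Proof.
move=> Ak; rewrite /side_total (bigD1 k) //= [in RHS](bigD1 k) //=.
rewrite side_noise_shift addSn; congr (_ + _).+1; apply: eq_bigr => k' /andP[_ k'k].
by rewrite ffunE xpair_eqE (negbTE k'k).
Qed.

Definition share k (nu : noise n m) : R :=
  (side b (nu (k, i0)))%:R / (side_total nu)%:R * noise_pmf r p nu.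

Lemma share_ge0 k nu : 0 <= share k nu.
Proof. by rewrite /share !mulr_ge0 ?invr_ge0 ?noise_pmf_ge0. Qed.

Lemma share_shift nu k : A k i0 ->
  share k (noise_shift b (k, i0) nu) =
  p * noise_pmf r p nu / (side_total nu).+1%:R * (r + (side b (nu (k, i0)))%:R).
Proof.
move=> Ak; rewrite /share side_total_shift // noise_pmf_shift side_noise_shift.
by field; rewrite !(addrC 1) !natr1 !pnatr_eq0.
Qed.

Lemma noise_pmf_transport nu :
  p * noise_pmf r p nu = \sum_(k < n | A k i0) share k (noise_shift b (k, i0) nu).
Proof.
rewrite (eq_bigr _ (share_shift nu)) -mulr_sumr big_split /=.
rewrite -natr_sum -/(side_total nu).
rewrite (eq_bigl (fun k => k \in [set k | A k i0])) => [|k]; last by rewrite inE.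
rewrite sumr_const -[r *+ _]mulr_natr r_owners -natr1.
by field; rewrite natr1 pnatr_eq0.
Qed.

Lemma sum_share_le nu : \sum_(k < n | A k i0) share k nu <= noise_pmf r p nu.
Proof.
rewrite /share -!mulr_suml -natr_sum -/(side_total nu).
have [->|S_neq0] := eqVneq (side_total nu) 0%N.
  by rewrite invr0 mulr0 mul0r noise_pmf_ge0.
by rewrite mulfV ?pnatr_eq0 // mul1r.
Qed.

Lemma shift_mass_le (Phi Psi : set (noise n m)) :
  (forall k nu, A k i0 -> Phi nu -> Psi (noise_shift b (k, i0) nu)) ->
  (p%:E * noise_mass r p Phi <= noise_mass r p Psi)%E.
Proof.
move=> shift_Psi; have share_ge0E k nu : (0 <= (share k nu)%:E)%E.
  by rewrite lee_fin share_ge0.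
rewrite /noise_mass -esumZl // => [|nu]; last by rewrite lee_fin noise_pmf_ge0.
under eq_esum => nu _ do rewrite -EFinM noise_pmf_transport -sumEFin.
rewrite esum_sum //; apply: le_trans
  (_ : \sum_(k < n | A k i0) \esum_(nu in Psi) (share k nu)%:E <= _)%E.
  apply: lee_sum => k Ak.
  rewrite -(esum_image Phi (noise_shift b (k, i0)) (fun nu => (share k nu)%:E));
    last by move=> nu1 nu2 _ _; apply: noise_shift_inj.
  by apply: ge0_subset_esum => // _ [nu Phi_nu <-]; apply: shift_Psi.
rewrite -esum_sum //; apply: le_esum => nu _.
by rewrite sumEFin lee_fin sum_share_le.
Qed.

End Transport.

Definition noise_total n m (A : 'I_n -> 'I_m -> bool) (nu : noise n m)
  (i : 'I_m) : int :=
  \sum_(j < n) (if A j i then (nu (j, i)).1%:Z - (nu (j, i)).2%:Z else 0).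

Definition bias (Pat D : Type) (mem : Pat -> D -> bool) n m (C : 'I_m -> Pat)
  (A : 'I_n -> 'I_m -> bool) (d : 'I_n -> D) (i : 'I_m) : int :=
  \sum_(j < n) (if A j i then (nat_of_bool (mem (C i) (d j)))%:Z else 0).

Definition signed_unit m (i0 : 'I_m) (b : bool) (i : 'I_m) : int :=
  if i == i0 then (if b then 1 else -1) else 0.

Lemma aggregateE (Pat D : Type) (mem : Pat -> D -> bool) n m (C : 'I_m -> Pat)
  (A : 'I_n -> 'I_m -> bool) (d : 'I_n -> D) (nu : noise n m) :
  aggregate mem C A d nu = bias mem C A d \+ noise_total A nu.
Proof.
apply: funext => i; rewrite /aggregate /bias /noise_total /= -big_split.
by apply: eq_bigr => j _; rewrite /upload; case: (A j i); rewrite /= ?addrA ?addr0.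
Qed.

Lemma noise_total_shift n m (A : 'I_n -> 'I_m -> bool) i0 b k (nu : noise n m) :
  A k i0 ->
  noise_total A (noise_shift b (k, i0) nu) = noise_total A nu \+ signed_unit i0 b.
Proof.
move=> Ak; apply: funext => i; rewrite /noise_total /signed_unit /=.
have [->|i_neq] := eqVneq i i0; last first.
  by rewrite addr0; apply: eq_bigr => j _; rewrite ffunE xpair_eqE (negbTE i_neq) andbF.
rewrite (bigD1 k) //= [in RHS](bigD1 k) //= ffunE eqxx Ak.
under eq_bigr => j j_neq do rewrite ffunE xpair_eqE (negbTE j_neq).
by case: b; rewrite /bump_side /=; lia.
Qed.

Definition offset_prob (R : realType) (r p : R) n m (A : 'I_n -> 'I_m -> bool)
  (O : set ('I_m -> int)) (c : 'I_m -> int) : \bar R :=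
  noise_mass r p [set nu | O (c \+ noise_total A nu)].

Lemma prob_outE (R : realType) (Pat D : Type) (mem : Pat -> D -> bool) n m
  (r p : R) (C : 'I_m -> Pat) (A : 'I_n -> 'I_m -> bool) (d : 'I_n -> D) O :
  prob_out mem r p C A d O = offset_prob r p A O (bias mem C A d).
Proof.
by rewrite /prob_out /offset_prob /noise_mass; under eq_fun do rewrite aggregateE.
Qed.

Section Offset.
Variables (R : realType) (r p : R) (n m : nat) (A : 'I_n -> 'I_m -> bool).
Variable O : set ('I_m -> int).
Hypotheses (r_ge0 : 0 <= r) (p_gt0 : 0 < p).
Hypothesis r_owners : forall i, r * #|[set k | A k i]|%:R = 1.

Local Notation Q := (offset_prob r p A O).

Lemma offset_prob_step (c : 'I_m -> int) i0 b :
  (p%:E * Q (c \+ signed_unit i0 b)%R <= Q c)%E.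
Proof.
apply: (shift_mass_le (i0 := i0) (b := b)) => // k nu Ak.
rewrite /= noise_total_shift //; congr O; apply: funext => i /=.
by rewrite addrA addrAC.
Qed.

Lemma offset_prob_le (c c' : 'I_m -> int) : (forall i, `|c i - c' i| <= 1) ->
  (Q c <= (p^-1 ^+ #|[set i | c i != c' i]|)%:E * Q c')%E.
Proof.
move Et : #|_| => t; elim: t c Et => [|t IH] c Et c_near.
  suff -> : c = c' by rewrite expr0 mul1e.
  apply: funext => i; apply/eqP/negbNE/negP => c_neq.
  by move/eqP: Et; rewrite cards_eq0 => /eqP/setP/(_ i); rewrite !inE c_neq.
have /set0Pn[i0] : [set i | c i != c' i] != finset.set0 by rewrite -card_gt0 Et.
rewrite inE => ci0_neq.
pose c1 i := if i == i0 then c' i else c i.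
have Et1 : #|[set i | c1 i != c' i]| = t.
  have -> : [set i | c1 i != c' i] = [set i | c i != c' i] :\ i0.
    by apply/setP => i; rewrite !inE /c1; case: (eqVneq i i0) => [->|]; rewrite ?eqxx.
  by move: (cardsD1 i0 [set i | c i != c' i]); rewrite Et inE ci0_neq add1n => -[].
have c1_near i : `|c1 i - c' i| <= 1.
  by rewrite /c1; case: eqP => _; rewrite ?subrr ?normr0.
have c_split : c = c1 \+ signed_unit i0 (c i0 - c' i0 == 1).
  apply: funext => i; rewrite /= /c1 /signed_unit.
  case: (eqVneq i i0) => [->|_]; last by rewrite addr0.
  by move: (c_near i0) ci0_neq; case: (c i0 - c' i0 =P 1) => /= ? ? ?; lia.
have pV_ge0 : (0 <= p^-1%:E)%E by rewrite lee_fin invr_ge0 ltW.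
apply: (@le_trans _ _ (p^-1%:E * (p%:E * Q c))%E).
  by rewrite muleA -EFinM mulVf ?gt_eqF // mul1e.
rewrite exprS EFinM -muleA; apply: lee_wpmul2l => //.
by rewrite {1}c_split; apply: le_trans (offset_prob_step _ _ _) (IH _ Et1 c1_near).
Qed.

End Offset.

Section Neighbours.
Variables (Pat D : Type) (mem : Pat -> D -> bool) (n m : nat).
Variables (C : 'I_m -> Pat) (A : 'I_n -> 'I_m -> bool) (j : 'I_n) (d d' : 'I_n -> D).
Hypothesis d_d' : forall k, k != j -> d k = d' k.

Lemma bias_neighbour i : bias mem C A d i - bias mem C A d' i =
  if A j i then (nat_of_bool (mem (C i) (d j)))%:Z - (nat_of_bool (mem (C i) (d' j)))%:Z
  else 0.
Proof.
rewrite /bias -sumrB (bigD1 j) //= big1 ?addr0 => [|k /d_d' ->]; last by rewrite subrr.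
by case: (A j i); rewrite ?subr0.
Qed.

Lemma bias_neighbour_near i : `|bias mem C A d i - bias mem C A d' i| <= 1.
Proof.
by rewrite bias_neighbour; case: (A j i) (mem _ (d j)) (mem _ (d' j)) => [] [] [].
Qed.

Lemma card_bias_neighbour :
  (#|[set i | bias mem C A d i != bias mem C A d' i]| <= #|[set i | A j i]|)%N.
Proof.
apply/subset_leq_card/fintype.subsetP => i; rewrite !inE; apply: contraR => Aji.
by rewrite -subr_eq0 bias_neighbour (negbTE Aji).
Qed.

End Neighbours.

Lemma expR_div_expn_le (R : realType) (eps : R) (K t : nat) :
  0 <= eps -> (0 < K)%N -> (t <= K)%N -> expR (eps / K%:R) ^+ t <= expR eps.
Proof.
move=> eps_ge0 K_gt0 tK.
have e_ge1 : 1 <= expR (eps / K%:R) by rewrite -expR0 ler_expR divr_ge0.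
apply: le_trans (ler_weXn2l e_ge1 tK) _.
by rewrite -expRM_natl mulrC divfK ?pnatr_eq0 -?lt0n.
Qed.

Theorem theorem2 (R : realType) (Pat D : Type) (mem : Pat -> D -> bool)
  (eps : R) (K P n m : nat) (C : 'I_m -> Pat) (A : 'I_n -> 'I_m -> bool) :
  0 < eps -> (1 <= K)%N -> (1 <= P)%N ->
  (forall i : 'I_m, #|[set j : 'I_n | A j i]| = P) ->
  (forall j : 'I_n, (#|[set i : 'I_m | A j i]| <= K)%N) ->
  forall (j : 'I_n) (d d' : 'I_n -> D),
    (forall k : 'I_n, k != j -> d k = d' k) ->
    forall O : set ('I_m -> int),
      (prob_out mem (P%:R)^-1 (expR (- eps / K%:R)) C A d O <=
       (expR eps)%:E * prob_out mem (P%:R)^-1 (expR (- eps / K%:R)) C A d' O)%E.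
Proof.
move=> eps_gt0 K_gt0 P_gt0 owners budget j d d' d_d' O.
have r_ge0 : 0 <= (P%:R)^-1 :> R by rewrite invr_ge0.
have r_owners i : (P%:R)^-1 * #|[set k | A k i]|%:R = 1 :> R.
  by rewrite owners mulVf // pnatr_eq0 -lt0n.
rewrite !prob_outE; apply: le_trans (offset_prob_le O r_ge0 (expR_gt0 _) r_owners
  (bias_neighbour_near mem C A d_d')) _.
apply: lee_wpmul2r; first exact/noise_mass_ge0/ltW/expR_gt0.
rewrite lee_fin mulNr expRN invrK expR_div_expn_le ?ltW //.
exact: leq_trans (card_bias_neighbour mem C A d_d') (budget j).
Qed.
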